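(* Let $\mathcal{L}:\mathbb{R}^d\to\mathbb{R}$ be differentiable and run full-batch MoFO with hyperparameters satisfying $\beta_1<\sqrt{\beta_2}<1$ and $\epsilon=0$ (arbitrary learning rates $\eta_t>0$). Then for every $t\ge1$ and every coordinate $1\le i\le d$, $$|\theta_{i,t}-\theta_{i,t-1}|\le\frac{1}{\sqrt{1-\beta_2}\,(1-\beta_1/\sqrt{\beta_2})}\cdot\eta_t\cdot\texttt{FLT}_\alpha(m_t)_i,$$ and moreover $\|\theta_t-\theta_{t-1}\|_2\le C\eta_t$, where $C=\dfrac{\sqrt{d\cdot(\alpha\%)+B}}{\sqrt{1-\beta_2}\,(1-\beta_1/\sqrt{\beta_2})}$.
   Context: The coordinates of $\mathbb{R}^d$ are partitioned into $B$ blocks of sizes $d_1,\dots,d_B$ with $\sum_kd_k=d$. Fix $\alpha\%\in(0,1]$. For $z\in\mathbb{R}^d$, $\texttt{FLT}_\alpha(z)\in\{0,1\}^d$ equals, in each block $k$, $1$ exactly on a set of $\lceil d_k\cdot\alpha\%\rceil$ indices with the largest absolute values of $z$ within that block (ties broken in favour of smaller indices), and $0$ elsewhere. Full-batch MoFO with $\beta_1,\beta_2\in(0,1)$, learning rates $\eta_t>0$, initial point $\theta_0$: $m_0=v_0=0$; for $t\ge1$, $g_t=\nabla\mathcal{L}(\theta_{t-1})$, $m_t=\beta_1m_{t-1}+(1-\beta_1)g_t$, $v_t=\beta_2v_{t-1}+(1-\beta_2)g_t\odot g_t$, $\hat m_t=m_t/(1-\beta_1^t)$, $\hat v_t=v_t/(1-\beta_2^t)$,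 $\theta_t=\theta_{t-1}-\eta_t(\hat m_t\odot\texttt{FLT}_\alpha(m_t))/\sqrt{\hat v_t}$ entrywise ($\epsilon=0$ means no additive constant in the denominator; a quotient with $\hat v_{i,t}=0$, where necessarily $\hat m_{i,t}=0$, is taken as $0$). Subscript $i,t$ denotes the $i$-th coordinate of the vector at iteration $t$. *)

From HB Require Import structures.
From mathcomp Require Import all_boot all_order all_algebra.
From mathcomp Require Import all_classical all_reals all_analysis.
Set Implicit Arguments. Unset Strict Implicit. Unset Printing Implicit Defensive.
Import Order.TTheory GRing.Theory Num.Theory.
Import numFieldNormedType.Exports.
Local Open Scope ring_scope.

Section MoFO.
Variables (R : realType) (d B : nat).

(* Partition of coordinates into B blocks: blk i is the block of coordinate i.
   Block k has size d_k = #|[set i | blk i == k]|. *)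

Definition blk_rank (blk : 'I_d -> 'I_B) (z : 'rV[R]_d) (i : 'I_d) : nat :=
  #|[set j : 'I_d | (blk j == blk i) &&
      ((`|z ord0 j| > `|z ord0 i|) || ((`|z ord0 j| == `|z ord0 i|) && (j < i)%N))]|.

Definition blk_size (blk : 'I_d -> 'I_B) (k : 'I_B) : nat :=
  #|[set j : 'I_d | blk j == k]|.

(* FLT_alpha(z) in {0,1}^d (as a real row vector): in block k, 1 exactly on the
   ceil(d_k * alpha) coordinates with largest |z| (ties -> smaller index). *)
Definition FLT (blk : 'I_d -> 'I_B) (alpha : R) (z : 'rV[R]_d) : 'rV[R]_d :=
  \row_i (if ((blk_rank blk z i)%:Z < Num.ceil ((blk_size blk (blk i))%:R * alpha))%R
          then 1 else 0).

Definition grad (L : 'rV[R]_d -> R) (x : 'rV[R]_d) : 'rV[R]_d :=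
  \row_i ('D_(delta_mx ord0 i : 'rV[R]_d) L x).

(* full-batch MoFO state (theta_t, m_t, v_t); eta t is the learning rate of step t.
   Division by 0 in MathComp is 0, matching the convention for hat v = 0. *)
Fixpoint mofo (L : 'rV[R]_d -> R) (blk : 'I_d -> 'I_B) (alpha beta1 beta2 : R)
  (eta : nat -> R) (theta0 : 'rV[R]_d) (t : nat) : 'rV[R]_d * 'rV[R]_d * 'rV[R]_d :=
  match t with
  | 0 => (theta0, 0, 0)
  | t'.+1 =>
    let: (th, m, v) := mofo L blk alpha beta1 beta2 eta theta0 t' in
    let g := grad L th in
    let m' := beta1 *: m + (1 - beta1) *: g in
    let v' := beta2 *: v + (1 - beta2) *: map_mx (fun x => x ^+ 2) g in
    let mh := (1 - beta1 ^+ t)^-1 *: m' in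
    let vh := (1 - beta2 ^+ t)^-1 *: v' in
    let F := FLT blk alpha m' in
    (\row_i (th ord0 i - eta t * (mh ord0 i * F ord0 i / Num.sqrt (vh ord0 i))), m', v')
  end.

Definition l2norm (x : 'rV[R]_d) : R := Num.sqrt (\sum_i x ord0 i ^+ 2).

End MoFO.

From HB Require Import structures.
From mathcomp Require Import all_boot all_order all_algebra.
From mathcomp Require Import all_classical all_reals all_analysis.
From mathcomp.algebra_tactics Require Import ring.
Import Order.TTheory GRing.Theory Num.Theory.
Import numFieldNormedType.Exports.
Local Open Scope ring_scope.

(* With rho = beta1 / sqrt beta2 < 1, the invariant |m_t| <= (1 - beta1) K sqrt v_t
   propagates along the recursion: sqrt v_t dominates both sqrt beta2 * sqrt v_(t-1)
   and sqrt (1 - beta2) * |g_t|, and the split 1 = rho + (1 - rho) pays for the two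
   terms of m_t.  Bias correction only helps, as 1 - beta1 <= 1 - beta1^t and
   1 - beta2^t <= 1.  Unselected coordinates do not move, and ranks inside a block are
   pairwise distinct, so a block of size d_k selects ceil(d_k alpha) <= d_k alpha + 1
   coordinates; summing the squared steps gives the l2 bound. *)
Section MomentBounds.
Variable R : rcfType.

Lemma ema_norm_le_sqrt_ema (b1 b2 c m v g : R) :
  0 <= b1 <= 1 -> 0 < b2 <= 1 -> b1 <= Num.sqrt b2 -> 0 <= c ->
  1 - b1 <= c * (Num.sqrt (1 - b2) * (1 - b1 / Num.sqrt b2)) ->
  0 <= v -> `|m| <= c * Num.sqrt v ->
  `|b1 * m + (1 - b1) * g| <= c * Num.sqrt (b2 * v + (1 - b2) * g ^+ 2).
Proof.
move=> /andP[b1_ge0 b1_le1] /andP[b2_gt0 b2_le1] b1_le c_ge0 hc v_ge0 hm.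
set rho := b1 / Num.sqrt b2; pose v' := b2 * v + (1 - b2) * g ^+ 2.
have sb2_gt0 : 0 < Num.sqrt b2 by rewrite sqrtr_gt0.
have rho_ge0 : 0 <= rho by rewrite divr_ge0 // ltW.
have rho_le1 : rho <= 1 by rewrite ler_pdivrMr // mul1r.
have g2_ge0 : 0 <= (1 - b2) * g ^+ 2 by rewrite mulr_ge0 ?sqr_ge0 // subr_ge0.
have v'_ge0 : 0 <= v' by rewrite addr_ge0 // mulr_ge0 // ltW.
have v'_ge_v : Num.sqrt b2 * Num.sqrt v <= Num.sqrt v'.
  by rewrite -sqrtrM ?ler_sqrt ?lerDl // ltW.
have v'_ge_g : Num.sqrt (1 - b2) * `|g| <= Num.sqrt v'.
  rewrite -sqrtr_sqr -sqrtrM ?subr_ge0 //.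
  by rewrite ler_sqrt // lerDr mulr_ge0 // ltW.
have split_v' : c * Num.sqrt v' = c * rho * Num.sqrt v' + c * (1 - rho) * Num.sqrt v'.
  by ring.
rewrite split_v'; apply: (le_trans (ler_normD _ _)).
have b1c_ge0 : 0 <= 1 - b1 by rewrite subr_ge0.
rewrite !normrM (ger0_norm b1_ge0) (ger0_norm b1c_ge0).
apply: lerD.
- apply: le_trans (ler_wpM2l b1_ge0 hm) _.
  have -> : b1 * (c * Num.sqrt v) = c * rho * (Num.sqrt b2 * Num.sqrt v).
    by rewrite /rho; field; rewrite gt_eqF.
  by rewrite ler_wpM2l // mulr_ge0.
- apply: le_trans (ler_wpM2r (normr_ge0 g) hc) _.
  have -> : c * (Num.sqrt (1 - b2) * (1 - rho)) * `|g|
            = c * (1 - rho) * (Num.sqrt (1 - b2) * `|g|) by ring.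
  by rewrite ler_wpM2l // mulr_ge0 // subr_ge0.
Qed.

Lemma bias_corrected_ratio_le (b1 b2 c m v : R) (n : nat) :
  0 <= b1 < 1 -> 0 <= b2 < 1 -> (0 < n)%N -> 0 <= c -> 0 <= v ->
  `|m| <= (1 - b1) * c * Num.sqrt v ->
  `|(1 - b1 ^+ n)^-1 * m / Num.sqrt ((1 - b2 ^+ n)^-1 * v)| <= c.
Proof.
move=> /andP[b1_ge0 b1_lt1] /andP[b2_ge0 b2_lt1] n_gt0 c_ge0 v_ge0 hm.
have c1_gt0 : 0 < 1 - b1 ^+ n by rewrite subr_gt0 exprn_ilt1 // gtn_eqF.
have c2_gt0 : 0 < 1 - b2 ^+ n by rewrite subr_gt0 exprn_ilt1 // gtn_eqF.
have hm' : (1 - b1 ^+ n)^-1 * `|m| <= c * Num.sqrt v.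
  apply: le_trans (ler_wpM2l _ hm) _; first by rewrite invr_ge0 ltW.
  have -> : (1 - b1 ^+ n)^-1 * ((1 - b1) * c * Num.sqrt v)
            = (1 - b1) / (1 - b1 ^+ n) * (c * Num.sqrt v) by ring.
  rewrite ler_piMl ?mulr_ge0 ?sqrtr_ge0 // ler_pdivrMr // mul1r.
  by rewrite lerD2l lerN2 ler_iXnr // ltW.
have hv : Num.sqrt v <= Num.sqrt ((1 - b2 ^+ n)^-1 * v).
  have c2inv_ge1 : 1 <= (1 - b2 ^+ n)^-1.
    by rewrite invf_ge1 // lerBlDr lerDl exprn_ge0.
  by rewrite ler_sqrt ?ler_peMl // mulr_ge0 // (le_trans ler01).
rewrite normf_div normrM gtr0_norm ?invr_gt0 // [`|Num.sqrt _|]ger0_norm ?sqrtr_ge0 //.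
have [->|den_neq0] := eqVneq (Num.sqrt ((1 - b2 ^+ n)^-1 * v)) 0.
  by rewrite invr0 mulr0.
rewrite ler_pdivrMr ?lt_def ?den_neq0 ?sqrtr_ge0 //.
by apply: le_trans hm' _; rewrite ler_wpM2l.
Qed.

End MomentBounds.

Lemma card_rank_lt_le (T : finType) (S : {pred T}) (r : T -> nat) (n : nat) :
  {in S &, injective r} -> (#|[set i in S | (r i < n)%N]| <= n)%N.
Proof.
move=> r_inj; set A := [set i in S | _].
have uniq_rA : uniq (map r (enum A)).
  rewrite map_inj_in_uniq ?enum_uniq // => i j.
  by rewrite !mem_enum !inE => /andP[iS _] /andP[jS _]; apply: r_inj.
rewrite cardE -(size_map r) -(size_iota 0 n); apply: uniq_leq_size uniq_rA _.
by move=> y /mapP[i]; rewrite mem_enum inE => /andP[_ ri] ->; rewrite mem_iota.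
Qed.

Section FilterCount.
Variables (R : realType) (d B : nat) (blk : 'I_d -> 'I_B) (z : 'rV[R]_d).

Definition outranks (j i : 'I_d) : bool :=
  (`|z ord0 j| > `|z ord0 i|) || ((`|z ord0 j| == `|z ord0 i|) && (j < i)%N).

Lemma outranks_irr i : ~~ outranks i i.
Proof. by rewrite /outranks ltxx eqxx ltnn. Qed.

Lemma outranks_trans i j l : outranks i j -> outranks j l -> outranks i l.
Proof.
rewrite /outranks => /orP[h1|/andP[/eqP e1 h1]] /orP[h2|/andP[/eqP e2 h2]].
- by rewrite (lt_trans h2 h1).
- by rewrite -e2 h1.
- by rewrite e1 h2.
- by rewrite e1 e2 eqxx (ltn_trans h1 h2) orbT.
Qed.

Lemma outranks_total i j : i != j -> outranks i j || outranks j i.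
Proof. by move=> ij; rewrite /outranks; case: ltgtP => //= _; rewrite -neq_ltn. Qed.

Lemma blk_rank_lt i j :
  blk j = blk i -> outranks j i -> (blk_rank blk z j < blk_rank blk z i)%N.
Proof.
move=> bji ji; apply: proper_card; apply/properP; split.
  apply/fintype.subsetP => l; rewrite !inE bji => /andP[-> lj] /=.
  exact: outranks_trans lj ji.
by exists j; rewrite !inE bji eqxx //=; apply: outranks_irr.
Qed.

Lemma blk_rank_inj (k : 'I_B) :
  {in [pred i | blk i == k] &, injective (blk_rank blk z)}.
Proof.
move=> i j /eqP bi /eqP bj rij; apply/eqP; apply: contraT => ij.
have b : blk j = blk i by rewrite bi bj.
case/orP: (outranks_total _ _ ij).
  by move/(blk_rank_lt _ _ (esym b)); rewrite rij ltnn.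
by move/(blk_rank_lt _ _ b); rewrite rij ltnn.
Qed.

Lemma FLT_block_sum_le (alpha : R) (k : 'I_B) : 0 <= alpha ->
  \sum_(i | blk i == k) FLT blk alpha z ord0 i <= (blk_size blk k)%:R * alpha + 1.
Proof.
move=> alpha_ge0; set x := (blk_size blk k)%:R * alpha.
have [n ceil_x] : exists n : nat, Num.ceil x = n%:Z.
  exists `|Num.ceil x|%N.
  by rewrite gez0_abs // ceil_ge0 (lt_le_trans _ (mulr_ge0 _ alpha_ge0)).
have n_lt : n%:R < x + 1.
  by rewrite -ltrBlDr; have := ceilB1_lt x; rewrite ceil_x rmorphB.
rewrite (eq_bigr (fun i => if (blk_rank blk z i < n)%N then 1 else 0)); last first.
  by move=> i /eqP bi; rewrite /FLT mxE bi ceil_x ltz_nat.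
rewrite -big_mkcondr sumr_const; apply/ltW/(le_lt_trans _ n_lt).
rewrite ler_nat (leq_trans _ (card_rank_lt_le _ _ _ n (blk_rank_inj k))) //.
by apply/eq_leq/eq_card => i; rewrite !inE.
Qed.

Lemma FLT_ge0 alpha i : 0 <= FLT blk alpha z ord0 i.
Proof. by rewrite mxE; case: ifP. Qed.

Lemma FLT_le1 alpha i : FLT blk alpha z ord0 i <= 1.
Proof. by rewrite mxE; case: ifP. Qed.

Lemma sum_blk_size : (\sum_k blk_size blk k)%N = d.
Proof.
rewrite /blk_size; under eq_bigr do rewrite -sum1dep_card.
by rewrite -[RHS]card_ord -sum1_card (partition_big blk predT).
Qed.

Lemma FLT_sum_le alpha : 0 <= alpha ->
  \sum_i FLT blk alpha z ord0 i <= d%:R * alpha + B%:R.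
Proof.
move=> alpha_ge0; rewrite (partition_big blk predT) //=.
have -> : d%:R * alpha + B%:R = \sum_k ((blk_size blk k)%:R * alpha + 1).
  by rewrite big_split /= -mulr_suml -natr_sum sum_blk_size sumr_const card_ord.
by apply: ler_sum => k _; apply: FLT_block_sum_le.
Qed.

End FilterCount.

Lemma l2norm_le_sqrt_sum (R : realType) (d : nat) (x f : 'rV[R]_d) (c : R) :
  0 <= c -> (forall i, 0 <= f ord0 i <= 1) -> (forall i, `|x ord0 i| <= c * f ord0 i) ->
  l2norm x <= Num.sqrt (\sum_i f ord0 i) * c.
Proof.
move=> c_ge0 f01 hx; rewrite -[c]ger0_norm // -sqrtr_sqr -sqrtrM ?sumr_ge0 //; last first.
  by move=> i _; case/andP: (f01 i).
rewrite ler_sqrt ?mulr_ge0 ?sqr_ge0 ?sumr_ge0 //; last by move=> i _; case/andP: (f01 i).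
rewrite mulr_suml; apply: ler_sum => i _.
have [f_ge0 f_le1] := andP (f01 i).
rewrite -real_normK ?num_real // (le_trans (lerXn2r _ _ _ (hx i))) ?nnegrE ?mulr_ge0 //.
by rewrite exprMn mulrC ler_wpM2r ?sqr_ge0 // expr2 ler_piMl.
Qed.

Section MoFOTrajectory.
Variables (R : realType) (d B : nat) (blk : 'I_d -> 'I_B) (L : 'rV[R]_d -> R).
Variables (alpha beta1 beta2 : R) (eta : nat -> R) (theta0 : 'rV[R]_d).

Local Notation state := (mofo L blk alpha beta1 beta2 eta theta0).
Local Notation theta t := (state t).1.1.
Local Notation m t := (state t).1.2.
Local Notation v t := (state t).2.
Local Notation g t := (grad L (theta t)).

Lemma mofo_m_succ t i : m t.+1 ord0 i = beta1 * m t ord0 i + (1 - beta1) * g t ord0 i.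
Proof. by rewrite /=; case: (state t) => [[th m] v] /=; rewrite !mxE. Qed.

Lemma mofo_v_succ t i :
  v t.+1 ord0 i = beta2 * v t ord0 i + (1 - beta2) * g t ord0 i ^+ 2.
Proof. by rewrite /=; case: (state t) => [[th m] v] /=; rewrite !mxE. Qed.

Lemma mofo_theta_succ t i :
  theta t.+1 ord0 i = theta t ord0 i - eta t.+1 *
    ((1 - beta1 ^+ t.+1)^-1 * m t.+1 ord0 i * FLT blk alpha (m t.+1) ord0 i
     / Num.sqrt ((1 - beta2 ^+ t.+1)^-1 * v t.+1 ord0 i)).
Proof. by rewrite /=; case: (state t) => [[th m] v] /=; rewrite !mxE. Qed.

Hypotheses (beta1_ge0 : 0 <= beta1) (beta2_gt0 : 0 < beta2) (beta2_lt1 : beta2 < 1).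

Lemma mofo_v_ge0 t i : 0 <= v t ord0 i.
Proof.
elim: t => [|t IH]; first by rewrite mxE.
have b2c_ge0 : 0 <= 1 - beta2 by rewrite subr_ge0 ltW.
by rewrite mofo_v_succ addr_ge0 // mulr_ge0 ?sqr_ge0 // ltW.
Qed.

Hypothesis beta1_lt_sqrt : beta1 < Num.sqrt beta2.

Local Notation K := (Num.sqrt (1 - beta2) * (1 - beta1 / Num.sqrt beta2))^-1.

Lemma mofo_denom_gt0 : 0 < (Num.sqrt (1 - beta2) * (1 - beta1 / Num.sqrt beta2)).
Proof.
rewrite mulr_gt0 ?sqrtr_gt0 ?subr_gt0 // ltr_pdivrMr ?sqrtr_gt0 //.
by rewrite mul1r.
Qed.

Lemma beta1_lt1 : beta1 < 1.
Proof. by rewrite (lt_le_trans beta1_lt_sqrt) // -sqrtr1 ler_sqrt // ltW. Qed.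

Lemma mofo_m_le_sqrt_v t i :
  `|m t ord0 i| <= (1 - beta1) * K * Num.sqrt (v t ord0 i).
Proof.
elim: t => [|t IH]; first by rewrite !mxE normr0 sqrtr0 mulr0.
rewrite mofo_m_succ mofo_v_succ; apply: ema_norm_le_sqrt_ema => //.
- by rewrite beta1_ge0 ltW // beta1_lt1.
- by rewrite beta2_gt0 ltW.
- exact: ltW.
- by rewrite mulr_ge0 ?invr_ge0 ?subr_ge0 ?ltW ?beta1_lt1 ?mofo_denom_gt0.
- by rewrite -mulrA mulVf ?mulr1 // gt_eqF // mofo_denom_gt0.
- exact: mofo_v_ge0.
Qed.

Lemma mofo_step_le t i : 0 <= eta t.+1 ->
  `|theta t.+1 ord0 i - theta t ord0 i| <= K * eta t.+1 * FLT blk alpha (m t.+1) ord0 i.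
Proof.
move=> eta_ge0; rewrite mofo_theta_succ addrAC subrr add0r normrN normrM ger0_norm //.
rewrite mulrAC normrM [`|FLT _ _ _ _ _|]ger0_norm ?FLT_ge0 // mulrA ler_wpM2r ?FLT_ge0 //.
rewrite [leRHS]mulrC ler_wpM2l //; apply: bias_corrected_ratio_le => //.
- by rewrite beta1_ge0 beta1_lt1.
- by rewrite ltW.
- by rewrite invr_ge0 ltW // mofo_denom_gt0.
- exact: mofo_v_ge0.
- exact: mofo_m_le_sqrt_v.
Qed.

End MoFOTrajectory.

Theorem lemma2 (R : realType) (d B : nat) (blk : 'I_d -> 'I_B)
  (L : 'rV[R]_d -> R) (alpha beta1 beta2 : R) (eta : nat -> R) (theta0 : 'rV[R]_d) :
  (forall x, differentiable L x) ->
  0 < alpha <= 1 ->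
  0 < beta1 < 1 -> 0 < beta2 < 1 ->
  beta1 < Num.sqrt beta2 ->
  (forall t, (0 < t)%N -> 0 < eta t) ->
  let theta t := (mofo L blk alpha beta1 beta2 eta theta0 t).1.1 in
  let m t := (mofo L blk alpha beta1 beta2 eta theta0 t).1.2 in
  let K := (Num.sqrt (1 - beta2) * (1 - beta1 / Num.sqrt beta2))^-1 in
  forall t : nat, (0 < t)%N ->
    (forall i : 'I_d,
       `|theta t ord0 i - theta t.-1 ord0 i| <= K * eta t * FLT blk alpha (m t) ord0 i)
    /\ l2norm (theta t - theta t.-1)
       <= Num.sqrt (d%:R * alpha + B%:R) * K * eta t.
Proof.
move=> _ /andP[alpha_gt0 _] /andP[beta1_gt0 _] /andP[beta2_gt0 beta2_lt1] beta1_lt heta.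
move=> theta m K [//|t] _ /=.
have eta_ge0 : 0 <= eta t.+1 by rewrite ltW ?heta.
have K_ge0 : 0 <= K by rewrite invr_ge0 ltW ?mofo_denom_gt0.
have step i : `|theta t.+1 ord0 i - theta t ord0 i|
               <= K * eta t.+1 * FLT blk alpha (m t.+1) ord0 i.
  by apply: mofo_step_le => //; apply: ltW.
split=> //; rewrite -mulrA.
apply: le_trans (@l2norm_le_sqrt_sum _ _ _ (FLT blk alpha (m t.+1)) (K * eta t.+1) _ _ _) _.
- by rewrite mulr_ge0.
- by move=> i; rewrite FLT_ge0 FLT_le1.
- by move=> i; apply: le_trans (step i); rewrite !mxE.
- by rewrite ler_wpM2r ?mulr_ge0 // ler_sqrt ?FLT_sum_le ?addr_ge0 ?mulr_ge0 // ltW.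
Qed.
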